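(* Let $\mathcal{M}_1=(E_1,\rho_1)$ and $\mathcal{M}_2=(E_2,\rho_2)$ be $q$-matroids and let $\mathcal{M}_1\oplus\mathcal{M}_2$ be their direct sum on $E=E_1\oplus E_2$. Then \[ \mathcal{Z}(\mathcal{M}_1\oplus\mathcal{M}_2)=\{Z_1\oplus Z_2\mid Z_1\in\mathcal{Z}(\mathcal{M}_1),\ Z_2\in\mathcal{Z}(\mathcal{M}_2)\}. \]
   Context: Let $\mathbb{F}=\mathbb{F}_q$ be a finite field. For a finite-dimensional $\mathbb{F}$-vector space $E$, $\mathcal{L}(E)$ is the lattice of its subspaces. A $q$-matroid is a pair $\mathcal{M}=(E,\rho)$ with $\rho:\mathcal{L}(E)\to\mathbb{Z}_{\ge0}$ such that $0\le\rho(V)\le\dim V$, $V\le W\Rightarrow\rho(V)\le\rho(W)$, and $\rho(V+W)+\rho(V\cap W)\le\rho(V)+\rho(W)$ for all $V,W$. A subspace $F$ is a flat if $\rho(F+\langle x\rangle)>\rho(F)$ for all $x\in E\setminus F$. The cyclic core of $V$ is $\mathrm{cyc}(V)=\{x\in V\mid \rho(W)=\rho(V)\text{ for all }W\le V\text{ with }W+\langle x\rangle=V\}$ (a subspace); $V$ is cyclic if $\mathrm{cyc}(V)=V$. $\mathcal{Z}(\mathcal{M})$ denotes the set of cyclic flats (subspaces that are both flats and cyclic). Direct sum: given $q$-matroids $\mathcal{M}_i=(E_i,\rho_i)$, $i=1,2$, let $E=E_1\oplus E_2$ (each $E_i$ identified with its image in $E$) with projections $\pi_i:E\to E_i$; the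 direct sum $\mathcal{M}_1\oplus\mathcal{M}_2=(E,\rho)$ is the $q$-matroid with $\rho(V)=\dim V+\min_{X\le V}\big(\rho_1(\pi_1(X))+\rho_2(\pi_2(X))-\dim X\big)$. *)

From HB Require Import structures.
From mathcomp Require Import all_boot all_algebra all_field.

Set Implicit Arguments.
Unset Strict Implicit.
Unset Printing Implicit Defensive.

Local Open Scope ring_scope.

Section QMatroid.
Variables (K : fieldType) (E : vectType K).
Implicit Types (V W : {vspace E}) (rho : {vspace E} -> nat).

Definition is_qmatroid rho : Prop :=
  [/\ (forall V, (rho V <= \dim V)%N),
      (forall V W, (V <= W)%VS -> (rho V <= rho W)%N) &
      (forall V W, (rho (V + W)%VS + rho (V :&: W)%VS <= rho V + rho W)%N)].

Definition is_flat rho (Fl : {vspace E}) : Prop :=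
  forall x : E, x \notin Fl -> (rho Fl < rho (Fl + <[x]>)%VS)%N.

Definition in_cyc rho V (x : E) : Prop :=
  x \in V /\
  (forall W, (W <= V)%VS -> (W + <[x]>)%VS = V -> rho W = rho V).

Definition is_cyclic rho V : Prop := forall x : E, x \in V -> in_cyc rho V x.

Definition is_cyclic_flat rho V : Prop := is_flat rho V /\ is_cyclic rho V.

End QMatroid.

(* ---------- enumerating subspaces ----------
   Over a finite field, every subspace X of vT equals mx2vs M (the span of the
   vectors whose coordinate rows are the rows of M) for some square matrix M
   (e.g. M = vs2mx X), and matrices over a finite field form a finite type.
   We use this to take minima over all subspaces. *)
Definition mxspace (F : finFieldType) (vT : vectType F)
    (M : 'M[F]_(dim vT)) : {vspace vT} :=
  @VectorInternalTheory.mx2vs F vT _ M.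

Section DirectSum.
Variables (F : finFieldType) (E1 E2 : vectType F).

Definition proj1v (X : {vspace E1 * E2}) : {vspace E1} :=
  (linfun (@fst E1 E2) @: X)%VS.
Definition proj2v (X : {vspace E1 * E2}) : {vspace E2} :=
  (linfun (@snd E1 E2) @: X)%VS.

Definition dsumv (Z1 : {vspace E1}) (Z2 : {vspace E2}) : {vspace E1 * E2} :=
  ((linfun (@fst E1 E2) @^-1: Z1) :&: (linfun (@snd E1 E2) @^-1: Z2))%VS.

(* rank function of the direct sum:
   rho V = dim V + min_{X <= V} (rho1 (pi1 X) + rho2 (pi2 X) - dim X);
   the quantity inside is computed in nat as dim V + rho1 + rho2 - dim X,
   which is never truncated since dim X <= dim V. *)
Definition dsum_cost (rho1 : {vspace E1} -> nat) (rho2 : {vspace E2} -> nat)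
    (V X : {vspace E1 * E2}) : nat :=
  (\dim V + rho1 (proj1v X) + rho2 (proj2v X) - \dim X)%N.

Definition dsum_rank (rho1 : {vspace E1} -> nat) (rho2 : {vspace E2} -> nat)
    (V : {vspace E1 * E2}) : nat :=
  dsum_cost rho1 rho2 V (mxspace
    [arg min_(M < (0 : 'M[F]_(dim (E1 * E2)%type))
              | (mxspace M <= V)%VS)
       dsum_cost rho1 rho2 V (mxspace M)]).

End DirectSum.

(* Write cost V X = dim V + rho1 (pi1 X) + rho2 (pi2 X) - dim X, so that rho V is the
   least cost V X over X <= V.  For a box Z1 (+) Z2 the box itself is a minimiser, since
   each rho_i grows no faster than dimension; hence rho (Z1 (+) Z2) = rho1 Z1 + rho2 Z2.
   If Z is cyclic, a minimiser X properly inside Z would lie in a hyperplane H of Z with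
   rho H = rho Z, and rho H <= cost H X < cost Z X is absurd; so rho Z is the rank of the
   box pi1 Z (+) pi2 Z containing Z, and a flat Z must equal that box.  For boxes,
   flatness and cyclicity are then checked factor by factor: a vector outside Z1 (+) Z2
   has a coordinate outside Z1 or Z2; and for a hyperplane W of Z1 (+) Z2 with minimiser
   X, either pi1 X and pi2 X fill the factors, or one of them is a proper subspace of a
   cyclic factor, whose strict rank deficit pays for the missing dimension. *)

From HB Require Import structures.
From mathcomp Require Import all_boot all_algebra all_field.
From mathcomp Require Import zify.
Import GRing.Theory.

Set Implicit Arguments.
Unset Strict Implicit.
Unset Printing Implicit Defensive.

Section Hyperplanes.
Variables (K : fieldType) (vT : vectType K).
Implicit Types (U Y Z : {vspace vT}) (x : vT).

Lemma dimv_add_line U x : \dim (U + <[x]>) = \dim U + (x \notin U).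
Proof.
have [xU | xU] := boolP (x \in U); first by rewrite (addv_idPl _) -?memvE ?addn0.
have x_neq0 : x != 0%R by apply: contraNneq xU => ->; rewrite mem0v.
have := dimv_add_leqif U <[x]>; rewrite dim_vline x_neq0 => -[le_dim _].
have lt_dim : \dim U < \dim (U + <[x]>).
  by rewrite (ltn_leqif (dimv_leqif_sup (addvSl U <[x]>))) subv_add subvv -memvE.
lia.
Qed.

Lemma exists_hyperplane Y Z x : (Y <= Z)%VS -> x \in Z -> x \notin Y ->
  exists H, [/\ (Y <= H)%VS, (H <= Z)%VS, (H + <[x]>)%VS = Z & \dim H < \dim Z].
Proof.
move=> YZ xZ xY; set S := (Y + <[x]>)%VS.
have SZ : (S <= Z)%VS by rewrite subv_add YZ -memvE.
exists (Y + (Z :\: S))%VS; split.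
- exact: addvSl.
- by rewrite subv_add YZ diffvSl.
- by rewrite -addvA (addvC (Z :\: S)%VS) addvA addvC addv_diff (addv_idPl SZ).
have := dimv_cap_compl Z S; rewrite (capv_idPr SZ).
have := dimv_add_line Y x; rewrite xY addn1 -/S.
have [le_dim _] := dimv_add_leqif Y (Z :\: S); lia.
Qed.

End Hyperplanes.

Lemma cyclic_proper_hyperplane (K : fieldType) (vT : vectType K)
    (rho : {vspace vT} -> nat) (V X : {vspace vT}) :
  is_cyclic rho V -> (X <= V)%VS -> ~~ (V <= X)%VS ->
  exists H, [/\ (X <= H)%VS, rho H = rho V & \dim H < \dim V].
Proof.
move=> cycV XV /subvPn[x xV xX].
have [H [XH HV HxV ltHV]] := exists_hyperplane XV xV xX.
by exists H; split => //; apply: (cycV x xV).2.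
Qed.

Section QMatroidTheory.
Variables (K : fieldType) (vT : vectType K) (rho : {vspace vT} -> nat).
Hypothesis rhoQ : is_qmatroid rho.
Implicit Types (V W X Y : {vspace vT}).

Lemma qm_rank_le_dim V : rho V <= \dim V.
Proof. by case: rhoQ. Qed.

Lemma qm_rankS V W : (V <= W)%VS -> rho V <= rho W.
Proof. by case: rhoQ => _ + _; apply. Qed.

Lemma qm_rank_submod V W : rho (V + W) + rho (V :&: W) <= rho V + rho W.
Proof. by case: rhoQ. Qed.

Lemma qm_rank_growth X W : (X <= W)%VS -> rho W + \dim X <= rho X + \dim W.
Proof.
move=> XW; have := qm_rank_submod (W :\: X) X.
rewrite addv_diff (addv_idPl XW) capv_diff.
have := qm_rank_le_dim 0; have := qm_rank_le_dim (W :\: X).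
have := dimv_cap_compl W X; rewrite (capv_idPr XW) dimv0; lia.
Qed.

Lemma cyclic_rank_growth_lt V X :
  is_cyclic rho V -> (X <= V)%VS -> ~~ (V <= X)%VS -> rho V + \dim X < rho X + \dim V.
Proof.
move=> cycV XV VX; have [H [XH <- ltHV]] := cyclic_proper_hyperplane cycV XV VX.
by have := qm_rank_growth XH; lia.
Qed.

Lemma flat_rank_cap_lt Fl Y : is_flat rho Fl -> ~~ (Y <= Fl)%VS ->
  rho (Fl :&: Y) < rho Y.
Proof.
move=> flatF /subvPn[y yY yF]; have := flatF y yF.
have : rho (Fl + <[y]>) <= rho (Fl + Y) by apply: qm_rankS; rewrite addvS // -memvE.
by have := qm_rank_submod Fl Y; lia.
Qed.

End QMatroidTheory.

Section DirectSumSpaces.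
Variables (F : finFieldType) (E1 E2 : vectType F).
Local Notation p1 := (linfun (@fst E1 E2)).
Local Notation p2 := (linfun (@snd E1 E2)).
Implicit Types (A : {vspace E1}) (B : {vspace E2}) (X Y : {vspace E1 * E2}).

Lemma mem_dsumv A B u : (u \in dsumv A B) = (u.1 \in A) && (u.2 \in B).
Proof. by rewrite memv_cap -!memv_preim !lfunE. Qed.

Lemma proj1vP X a : reflect (exists2 u, u \in X & a = u.1) (a \in proj1v X).
Proof. by apply: (iffP memv_imgP) => -[u uX ->]; exists u; rewrite ?lfunE. Qed.

Lemma proj2vP X b : reflect (exists2 u, u \in X & b = u.2) (b \in proj2v X).
Proof. by apply: (iffP memv_imgP) => -[u uX ->]; exists u; rewrite ?lfunE. Qed.

Lemma mem_proj1v X u : u \in X -> u.1 \in proj1v X.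
Proof. by move=> uX; apply/proj1vP; exists u. Qed.

Lemma mem_proj2v X u : u \in X -> u.2 \in proj2v X.
Proof. by move=> uX; apply/proj2vP; exists u. Qed.

Lemma proj1vS X Y : (X <= Y)%VS -> (proj1v X <= proj1v Y)%VS.
Proof. exact: limgS. Qed.

Lemma proj2vS X Y : (X <= Y)%VS -> (proj2v X <= proj2v Y)%VS.
Proof. exact: limgS. Qed.

Lemma proj1v_sub_dsumv X A B : (X <= dsumv A B)%VS -> (proj1v X <= A)%VS.
Proof.
move/subvP=> XAB; apply/subvP=> a /proj1vP[u /XAB].
by rewrite mem_dsumv => /andP[uA _] ->.
Qed.

Lemma proj2v_sub_dsumv X A B : (X <= dsumv A B)%VS -> (proj2v X <= B)%VS.
Proof.
move/subvP=> XAB; apply/subvP=> b /proj2vP[u /XAB].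
by rewrite mem_dsumv => /andP[_ uB] ->.
Qed.

Lemma subv_dsumv_proj X : (X <= dsumv (proj1v X) (proj2v X))%VS.
Proof. by apply/subvP=> u uX; rewrite mem_dsumv mem_proj1v ?mem_proj2v. Qed.

Lemma dsumvS A A' B B' :
  (A <= A')%VS -> (B <= B')%VS -> (dsumv A B <= dsumv A' B')%VS.
Proof.
move=> /subvP AA' /subvP BB'; apply/subvP=> u.
by rewrite !mem_dsumv => /andP[/AA' -> /BB' ->].
Qed.

Lemma proj1v_dsumv A B : proj1v (dsumv A B) = A.
Proof.
apply/eqP; rewrite eqEsubv (proj1v_sub_dsumv (subvv _)).
by apply/subvP=> a aA; apply/proj1vP; exists (a, 0%R); rewrite ?mem_dsumv ?aA ?mem0v.
Qed.

Lemma proj2v_dsumv A B : proj2v (dsumv A B) = B.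
Proof.
apply/eqP; rewrite eqEsubv (proj2v_sub_dsumv (subvv _)).
by apply/subvP=> b bB; apply/proj2vP; exists (0%R, b); rewrite ?mem_dsumv ?bB ?mem0v.
Qed.

Lemma dsumv_add A A' B B' :
  (dsumv A B + dsumv A' B')%VS = dsumv (A + A') (B + B').
Proof.
apply/eqP; rewrite eqEsubv subv_add !dsumvS ?addvSl ?addvSr //=.
apply/subvP=> -[a b]; rewrite mem_dsumv /= => /andP[/memv_addP[a1 a1A [a2 a2A ->]]].
move=> /memv_addP[b1 b1B [b2 b2B ->]].
have -> : ((a1 + a2, b1 + b2) = (a1, b1) + (a2, b2))%R by [].
by rewrite memv_add // mem_dsumv ?a1A ?a2A.
Qed.

Lemma dsumv_line1 (a : E1) : <[(a, 0%R)]>%VS = dsumv <[a]> (0 : {vspace E2}).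
Proof.
apply/vspaceP=> u; rewrite mem_dsumv memv0.
apply/vlineP/andP=> [[k ->] | [/vlineP[k u1] /eqP u2]].
  by rewrite /= scaler0 eqxx memvZ ?memv_line.
by exists k; case: u u1 u2 => /= ? ? -> ->; rewrite -[RHS]/(k *: a, k *: 0)%R scaler0.
Qed.

Lemma dsumv_line2 (b : E2) : <[(0%R, b)]>%VS = dsumv (0 : {vspace E1}) <[b]>.
Proof.
apply/vspaceP=> u; rewrite mem_dsumv memv0.
apply/vlineP/andP=> [[k ->] | [/eqP u1 /vlineP[k u2]]].
  by rewrite /= scaler0 eqxx memvZ ?memv_line.
by exists k; case: u u1 u2 => /= ? ? -> ->; rewrite -[RHS]/(k *: 0, k *: b)%R scaler0.
Qed.

Lemma dim_dsumv A B : \dim (dsumv A B) = \dim A + \dim B.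
Proof.
have ker1 : (dsumv A B :&: lker p1 = dsumv 0 B)%VS.
  apply/vspaceP=> u; rewrite memv_cap memv_ker !mem_dsumv memv0 lfunE /=.
  by case: eqP => [->|_]; rewrite ?mem0v ?andbT ?andbF.
have ker2 : (dsumv 0 B :&: lker p2 = 0)%VS.
  apply/vspaceP=> -[a b]; rewrite memv_cap memv_ker mem_dsumv !memv0 lfunE /=.
  rewrite -[(0 : E1 * E2)%R]/(0%R, 0%R) xpair_eqE.
  by have [->|] := eqVneq b 0%R; rewrite ?mem0v ?andbT ?andbF.
rewrite -(limg_ker_dim p1 (dsumv A B)) ker1 -(limg_ker_dim p2 (dsumv 0 B)) ker2.
rewrite dimv0 -[(p1 @: _)%VS]/(proj1v _) -[(p2 @: _)%VS]/(proj2v _).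
by rewrite proj1v_dsumv proj2v_dsumv addnC.
Qed.

End DirectSumSpaces.

Section DirectSumRank.
Variables (F : finFieldType) (E1 E2 : vectType F).
Variables (rho1 : {vspace E1} -> nat) (rho2 : {vspace E2} -> nat).
Hypotheses (rho1Q : is_qmatroid rho1) (rho2Q : is_qmatroid rho2).
Local Notation rho := (dsum_rank rho1 rho2).
Local Notation cost := (dsum_cost rho1 rho2).
Implicit Types (A : {vspace E1}) (B : {vspace E2}) (V W X Z : {vspace E1 * E2}).

Lemma dsum_costE V X : (X <= V)%VS ->
  cost V X + \dim X = \dim V + rho1 (proj1v X) + rho2 (proj2v X).
Proof. by move=> XV; have := dimvS XV; rewrite /dsum_cost; lia. Qed.

Lemma mxspace0 : mxspace (0 : 'M[F]_(dim (E1 * E2)%type)) = 0%VS.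
Proof.
by apply/eqP; rewrite -dimv_eq0 /dimv /mxspace VectorInternalTheory.mx2vsK mxrank0.
Qed.

Lemma dsum_rank_le V X : (X <= V)%VS -> rho V <= cost V X.
Proof.
move=> XV; rewrite /dsum_rank.
case: arg_minnP => [|M _ minM]; first by rewrite mxspace0 sub0v.
have := minM (VectorInternalTheory.vs2mx X).
by rewrite /mxspace VectorInternalTheory.vs2mxK; apply.
Qed.

Lemma dsum_rank_witness V : exists2 X, (X <= V)%VS & rho V = cost V X.
Proof.
rewrite /dsum_rank; case: arg_minnP => [|M MV _]; first by rewrite mxspace0 sub0v.
by exists (mxspace M).
Qed.

Lemma dsum_rank_le_proj V : rho V <= rho1 (proj1v V) + rho2 (proj2v V).
Proof. by have := dsum_rank_le (subvv V); have := dsum_costE (subvv V); lia. Qed.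

Lemma dsum_cost_capS Z V X : (Z <= V)%VS -> (X <= V)%VS ->
  cost Z (X :&: Z) <= cost V X.
Proof.
move=> ZV XV; have := dsum_costE (capvSr X Z); have := dsum_costE XV.
have := dimv_sum_cap X Z; have : (X + Z <= V)%VS by rewrite subv_add XV ZV.
move/dimvS; have := qm_rankS rho1Q (proj1vS (capvSl X Z)).
by have := qm_rankS rho2Q (proj2vS (capvSl X Z)); lia.
Qed.

Lemma dsum_rankS Z V : (Z <= V)%VS -> rho Z <= rho V.
Proof.
move=> ZV; have [X XV ->] := dsum_rank_witness V.
exact: leq_trans (dsum_rank_le (capvSr X Z)) (dsum_cost_capS ZV XV).
Qed.

Lemma dsum_rank_dsumv A B : rho (dsumv A B) = rho1 A + rho2 B.
Proof.
apply/eqP; rewrite eqn_leq; apply/andP; split.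
  by have := dsum_rank_le_proj (dsumv A B); rewrite proj1v_dsumv proj2v_dsumv.
have [X XAB ->] := dsum_rank_witness (dsumv A B).
have := qm_rank_growth rho1Q (proj1v_sub_dsumv XAB).
have := qm_rank_growth rho2Q (proj2v_sub_dsumv XAB).
have := dimvS (subv_dsumv_proj X); rewrite !dim_dsumv.
by have := dsum_costE XAB; rewrite dim_dsumv; lia.
Qed.

Lemma dsum_rank_cyclic Z :
  is_cyclic rho Z -> rho Z = rho1 (proj1v Z) + rho2 (proj2v Z).
Proof.
move=> cycZ; apply/eqP; rewrite eqn_leq dsum_rank_le_proj /=.
have [X XZ eqZ] := dsum_rank_witness Z; rewrite eqZ.
have [ZX | /(cyclic_proper_hyperplane cycZ XZ)[H [XH eqH ltHZ]]] := boolP (Z <= X)%VS.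
  have -> : X = Z by apply/eqP; rewrite eqEsubv XZ ZX.
  by have := dsum_costE (subvv Z); lia.
by have := dsum_rank_le XH; have := dsum_costE XH; have := dsum_costE XZ; lia.
Qed.

Lemma cyclic_flat_dsumv_proj Z : is_flat rho Z -> is_cyclic rho Z ->
  Z = dsumv (proj1v Z) (proj2v Z).
Proof.
move=> flatZ cycZ; apply/eqP; rewrite eqEsubv subv_dsumv_proj /=.
apply: contraT => /subvPn[x xP xZ]; have := flatZ x xZ.
have : rho (Z + <[x]>) <= rho (dsumv (proj1v Z) (proj2v Z)).
  by apply: dsum_rankS; rewrite subv_add subv_dsumv_proj -memvE.
by rewrite dsum_rank_dsumv -dsum_rank_cyclic //; lia.
Qed.

Lemma flat_dsumv_rank_lt (Z1 : {vspace E1}) (Z2 : {vspace E2}) A B :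
  is_flat rho (dsumv Z1 Z2) ->
  (dsumv Z1 Z2 <= dsumv A B)%VS -> ~~ (dsumv A B <= dsumv Z1 Z2)%VS ->
  rho1 Z1 + rho2 Z2 < rho1 A + rho2 B.
Proof.
move=> flatZ ZAB /subvPn[x xAB xZ]; rewrite -!dsum_rank_dsumv.
by apply: leq_trans (flatZ x xZ) (dsum_rankS _); rewrite subv_add ZAB -memvE.
Qed.

Lemma dsumv_flat1 (Z1 : {vspace E1}) (Z2 : {vspace E2}) :
  is_flat rho (dsumv Z1 Z2) -> is_flat rho1 Z1.
Proof.
move=> flatZ a aZ1; rewrite -(ltn_add2r (rho2 Z2)).
apply: flat_dsumv_rank_lt flatZ _ _; first by rewrite dsumvS ?addvSl.
apply/subvPn; exists (a, 0%R); rewrite !mem_dsumv /= ?(negPf aZ1) //.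
by rewrite mem0v andbT memvE addvSr.
Qed.

Lemma dsumv_flat2 (Z1 : {vspace E1}) (Z2 : {vspace E2}) :
  is_flat rho (dsumv Z1 Z2) -> is_flat rho2 Z2.
Proof.
move=> flatZ b bZ2; rewrite -(ltn_add2l (rho1 Z1)).
apply: flat_dsumv_rank_lt flatZ _ _; first by rewrite dsumvS ?addvSl.
apply/subvPn; exists (0%R, b); rewrite !mem_dsumv /= ?(negPf bZ2) ?andbF //.
by rewrite mem0v memvE addvSr.
Qed.

Lemma dsumv_cyclic1 (Z1 : {vspace E1}) (Z2 : {vspace E2}) :
  is_cyclic rho (dsumv Z1 Z2) -> is_cyclic rho1 Z1.
Proof.
move=> cycZ a aZ1; split=> // W1 W1Z1 eqW1.
have aZ : (a, 0%R) \in dsumv Z1 Z2 by rewrite mem_dsumv aZ1 mem0v.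
have := (cycZ _ aZ).2 _ (dsumvS W1Z1 (subvv Z2)).
rewrite dsumv_line1 dsumv_add eqW1 addv0 !dsum_rank_dsumv => /(_ erefl) /eqP.
by rewrite eqn_add2r => /eqP.
Qed.

Lemma dsumv_cyclic2 (Z1 : {vspace E1}) (Z2 : {vspace E2}) :
  is_cyclic rho (dsumv Z1 Z2) -> is_cyclic rho2 Z2.
Proof.
move=> cycZ b bZ2; split=> // W2 W2Z2 eqW2.
have bZ : (0%R, b) \in dsumv Z1 Z2 by rewrite mem_dsumv bZ2 mem0v.
have := (cycZ _ bZ).2 _ (dsumvS (subvv Z1) W2Z2).
rewrite dsumv_line2 dsumv_add eqW2 addv0 !dsum_rank_dsumv => /(_ erefl) /eqP.
by rewrite eqn_add2l => /eqP.
Qed.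

Lemma flat_dsumv_proj_rank_lt (Z1 : {vspace E1}) (Z2 : {vspace E2}) X :
  is_flat rho1 Z1 -> is_flat rho2 Z2 -> ~~ (X <= dsumv Z1 Z2)%VS ->
  rho1 (proj1v (X :&: dsumv Z1 Z2)) + rho2 (proj2v (X :&: dsumv Z1 Z2))
    < rho1 (proj1v X) + rho2 (proj2v X).
Proof.
move=> flat1 flat2 /subvPn[u uX]; set Y := (X :&: dsumv Z1 Z2)%VS.
have YZ : (Y <= dsumv Z1 Z2)%VS := capvSr _ _.
have YX : (Y <= X)%VS := capvSl _ _.
have le1 := qm_rankS rho1Q (proj1vS YX); have le2 := qm_rankS rho2Q (proj2vS YX).
rewrite mem_dsumv negb_and => /orP[u1 | u2].
  have : rho1 (proj1v Y) <= rho1 (Z1 :&: proj1v X).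
    by apply: (qm_rankS rho1Q); rewrite subv_cap (proj1v_sub_dsumv YZ) proj1vS.
  have : ~~ (proj1v X <= Z1)%VS by apply/subvPn; exists u.1; rewrite ?mem_proj1v.
  by move/(flat_rank_cap_lt rho1Q flat1); lia.
have : rho2 (proj2v Y) <= rho2 (Z2 :&: proj2v X).
  by apply: (qm_rankS rho2Q); rewrite subv_cap (proj2v_sub_dsumv YZ) proj2vS.
have : ~~ (proj2v X <= Z2)%VS by apply/subvPn; exists u.2; rewrite ?mem_proj2v.
by move/(flat_rank_cap_lt rho2Q flat2); lia.
Qed.

Lemma dsumv_flat (Z1 : {vspace E1}) (Z2 : {vspace E2}) :
  is_flat rho1 Z1 -> is_flat rho2 Z2 -> is_flat rho (dsumv Z1 Z2).
Proof.
move=> flat1 flat2 x xZ; set Z := dsumv Z1 Z2 in xZ *; set V := (Z + <[x]>)%VS.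
have ZV : (Z <= V)%VS := addvSl _ _.
have ltZV : \dim Z < \dim V by rewrite dimv_add_line xZ addn1.
have [X XV ->] := dsum_rank_witness V.
apply: leq_ltn_trans (dsum_rank_le (capvSr X Z)) _.
have := dsum_costE XV; have [XZ | XZ] := boolP (X <= Z)%VS.
  by rewrite (capv_idPl XZ); have := dsum_costE XZ; lia.
have := flat_dsumv_proj_rank_lt flat1 flat2 XZ; rewrite -/Z.
have := dsum_costE (capvSr X Z).
have := dimv_sum_cap X Z; have : (X + Z <= V)%VS by rewrite subv_add XV ZV.
by move/dimvS; lia.
Qed.

Lemma dsumv_cyclic (Z1 : {vspace E1}) (Z2 : {vspace E2}) :
  is_cyclic rho1 Z1 -> is_cyclic rho2 Z2 -> is_cyclic rho (dsumv Z1 Z2).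
Proof.
move=> cyc1 cyc2 x xZ; split=> // W WZ eqW.
apply/eqP; rewrite eqn_leq dsum_rankS //= dsum_rank_dsumv.
have [X XW ->] := dsum_rank_witness W.
have XZ := subv_trans XW WZ.
have sub1 := proj1v_sub_dsumv XZ; have sub2 := proj2v_sub_dsumv XZ.
have := dsum_costE XW; have := dimvS XW.
have := dimvS (subv_dsumv_proj X); rewrite dim_dsumv.
have := leq_b1 (x \notin W); have := dimv_add_line W x; rewrite eqW dim_dsumv.
have := qm_rank_growth rho1Q sub1; have := qm_rank_growth rho2Q sub2.
have [/andP[Z1X Z2X] | ] := boolP ((Z1 <= proj1v X) && (Z2 <= proj2v X))%VS.
  by have := qm_rankS rho1Q Z1X; have := qm_rankS rho2Q Z2X; lia.
rewrite negb_and => /orP[/(cyclic_rank_growth_lt rho1Q cyc1 sub1) |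
                         /(cyclic_rank_growth_lt rho2Q cyc2 sub2)]; lia.
Qed.

Lemma dsumv_flatE (Z1 : {vspace E1}) (Z2 : {vspace E2}) :
  is_flat rho (dsumv Z1 Z2) <-> is_flat rho1 Z1 /\ is_flat rho2 Z2.
Proof.
split=> [flatZ | [flat1 flat2]]; last exact: dsumv_flat.
by split; [apply: dsumv_flat1 flatZ | apply: dsumv_flat2 flatZ].
Qed.

Lemma dsumv_cyclicE (Z1 : {vspace E1}) (Z2 : {vspace E2}) :
  is_cyclic rho (dsumv Z1 Z2) <-> is_cyclic rho1 Z1 /\ is_cyclic rho2 Z2.
Proof.
split=> [cycZ | [cyc1 cyc2]]; last exact: dsumv_cyclic.
by split; [apply: dsumv_cyclic1 cycZ | apply: dsumv_cyclic2 cycZ].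
Qed.

End DirectSumRank.

Theorem theorem6p2 (F : finFieldType) (E1 E2 : vectType F)
    (rho1 : {vspace E1} -> nat) (rho2 : {vspace E2} -> nat) :
  is_qmatroid rho1 -> is_qmatroid rho2 ->
  forall Z : {vspace E1 * E2},
    is_cyclic_flat (dsum_rank rho1 rho2) Z <->
    exists (Z1 : {vspace E1}) (Z2 : {vspace E2}),
      [/\ is_cyclic_flat rho1 Z1, is_cyclic_flat rho2 Z2 & Z = dsumv Z1 Z2].
Proof.
move=> rho1Q rho2Q Z; split=> [[flatZ cycZ] | [Z1 [Z2 [[flat1 cyc1] [flat2 cyc2] ->]]]].
  have eqZ := cyclic_flat_dsumv_proj rho1Q rho2Q flatZ cycZ.
  move: flatZ cycZ; rewrite eqZ (dsumv_flatE rho1Q rho2Q) (dsumv_cyclicE rho1Q rho2Q).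
  by move=> [flat1 flat2] [cyc1 cyc2]; exists (proj1v Z), (proj2v Z).
by split; [apply/(dsumv_flatE rho1Q rho2Q) | apply/(dsumv_cyclicE rho1Q rho2Q)].
Qed.
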